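(* Let $t\in\mathbb{N}$ and let $C_1=C_1(t)$ be a constant with the property described in the context. Then there exists a constant $C_2=C_2(t)$ such that for all $\alpha_1,\ldots,\alpha_t\in\mathbb{T}$, all positive $\varepsilon\le 1/C_1(t)$, all positive $r\le 1$ and all positive integers $N$ and $U$, there is a nonempty finite set $S$ of integers satisfying (i) $U<\min S$; (ii) for all $j\le t$: $\sum_{n\in S}\|n\alpha_j\|^r\le C_2\,\dfrac{\varepsilon^r}{2^r-1}$; (iii) for all $\beta\in\mathbb{T}$: $\min\{1/6,\ \|\beta H_{N,\varepsilon}(\alpha_1,\ldots,\alpha_t)\|\}\le\|\beta S\|$.
   Context: $\mathbb{T}=\mathbb{R}/\mathbb{Z}$; $\|x\|$ is the distance from $x$ to the nearest integer. $H_{N,\varepsilon}(\alpha_1,\ldots,\alpha_t)=\{n\in\mathbb{N}, n\le N: \|n\alpha_1\|,\ldots,\|n\alpha_t\|\le\varepsilon\}$. For $\beta\in\mathbb{T}$ and a set $S$ of integers, $\|\beta S\|=\sup\{\|n\beta\|: n\in S\}$. The constant $C_1(t)$ (which exists by a result of Bir\'o and S\'os) has the property: for all $\alpha_1,\ldots,\alpha_t\in\mathbb{T}$, all positive $\varepsilon\le 1/C_1$ and all positive integers $N$ there exist $R\le C_1$, nonzero integers $n_1,\ldots,n_R$ and positive integers $K_1,\ldots,K_R$ such that (a) $\sum_{i=1}^R K_i\|n_i\alpha_j\|\le C_1\varepsilon$ for $1\le j\le t$; (b) $\sum_{i=1}^R K_i|n_i|\le C_1 N$; (c) $H_{N,\varepsilon}(\alpha_1,\ldots,\alpha_t)\subseteq\{\sum_{i=1}^R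 k_in_i: 1\le k_i\le K_i\}$. *)

From HB Require Import structures.
From mathcomp Require Import all_boot all_order all_algebra.
From mathcomp Require Import reals exp.
Set Implicit Arguments. Unset Strict Implicit. Unset Printing Implicit Defensive.
Import Order.TTheory GRing.Theory Num.Theory.
Local Open Scope ring_scope.

(* Elements of T = R/Z are represented by real numbers; all notions below
   only depend on the class mod 1. *)

Definition distZ (R : realType) (x : R) : R :=
  Num.min (x - (Num.floor x)%:~R) ((Num.floor x)%:~R + 1 - x).

Definition nrm (R : realType) (n : int) (a : R) : R := distZ (n%:~R * a).

(* H_{N,eps}(alpha_1..alpha_t) = {n in N, 1 <= n <= N : ||n alpha_j|| <= eps for all j},
   as a duplicate-free list of integers. *)
Definition Hset (R : realType) (t : nat) (alpha : 'I_t -> R) (N : nat) (eps : R)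
  : seq int :=
  [seq (n%:Z) | n <- iota 1 N & [forall j : 'I_t, nrm (n%:Z) (alpha j) <= eps]].

(* ||beta S|| = sup {||n beta|| : n in S} for a finite set S (sup of the empty set = 0,
   the natural value since all norms are >= 0) *)
Definition nrmset (R : realType) (beta : R) (S : seq int) : R :=
  \big[Num.max/0]_(n <- S) nrm n beta.

Definition BiroSos_prop (R : realType) (t : nat) (C1 : R) : Prop :=
  forall (alpha : 'I_t -> R) (eps : R) (N : nat),
    0 < eps -> eps <= 1 / C1 -> (0 < N)%N ->
    exists (Rn : nat) (n : 'I_Rn -> int) (K : 'I_Rn -> nat),
      [/\ Rn%:R <= C1,
          (forall i, n i != 0 /\ (0 < K i)%N),
          (forall j : 'I_t, \sum_(i < Rn) (K i)%:R * nrm (n i) (alpha j) <= C1 * eps),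
          \sum_(i < Rn) (K i)%:R * `|n i|%:~R <= C1 * N%:R
        & forall m, m \in Hset alpha N eps ->
            exists k : 'I_Rn -> nat,
              (forall i, (1 <= k i <= K i)%N) /\ m = \sum_(i < Rn) (k i)%:Z * n i].

From HB Require Import structures.
From mathcomp Require Import all_boot all_order all_algebra.
From mathcomp Require Import mathcomp_extra reals exp.
From mathcomp Require Import ring lra zify.
Import Order.TTheory GRing.Theory Num.Theory.
Local Open Scope ring_scope.
Set Implicit Arguments. Unset Strict Implicit. Unset Printing Implicit Defensive.

(* By the Biro-Sos property, H_{N,eps} lies in {sum_i k_i n_i : 1 <= k_i <= K_i}.
   Take S = {M} u {M + 2^l n_i : l <= L_i}, where 2 R K_i <= 2^(L_i) <= 4 R K_i and
   M > U is given by Dirichlet's theorem, with every ||M alpha_j|| tiny.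
   For (ii), x |-> x^r is subadditive, so ||(M + 2^l n_i) alpha||^r is at most
   ||M alpha||^r + (2^l ||n_i alpha||)^r, and the geometric sum over l is dominated by
   (2^(L_i+1) ||n_i alpha||)^r / (2^r - 1), where 2^(L_i+1) ||n_i alpha|| <= 8 R K_i ||n_i alpha||
   <= 8 C1^2 eps.
   For (iii), if d = ||beta S|| < 1/6 then ||2^l n_i beta|| <= 2d for all l <= L_i.  Doubling
   is exact on distances below 1/3, so ||n_i beta|| <= 2d / 2^(L_i) <= d / (R K_i), whence
   ||m beta|| <= sum_i k_i ||n_i beta|| <= d for every m in H. *)

Section DistanceToIntegers.
Variable R : realType.
Implicit Types x y e : R.

Lemma distZ_le x (z : int) : distZ x <= `|x - z%:~R|.
Proof.
rewrite /distZ; have /andP[fl_le lt_fl1] := floor_itv x; rewrite intrD1 in lt_fl1.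
case: (lerP z (Num.floor x)) => [|]; rewrite -?lezD1 => hz.
  have zfl : (z%:~R : R) <= (Num.floor x)%:~R by rewrite ler_int.
  by rewrite ger0_norm; [rewrite ge_min; apply/orP; left|]; lra.
have flz : ((Num.floor x)%:~R + 1 : R) <= z%:~R by rewrite -intrD1 ler_int.
by rewrite ler0_norm; [rewrite ge_min; apply/orP; right|]; lra.
Qed.

Lemma distZ_attained x : exists z : int, distZ x = `|x - z%:~R|.
Proof.
rewrite /distZ; have /andP[fl_le lt_fl1] := floor_itv x; rewrite intrD1 in lt_fl1.
case: (leP (x - (Num.floor x)%:~R) ((Num.floor x)%:~R + 1 - x)) => h.
  by exists (Num.floor x); rewrite ger0_norm //; lra.
by exists (Num.floor x + 1); rewrite intrD1 ler0_norm; lra.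
Qed.

Lemma distZ_ge0 x : 0 <= distZ x.
Proof. by have [z ->] := distZ_attained x. Qed.

Lemma distZ0 : distZ 0 = 0 :> R.
Proof. by apply/eqP; rewrite eq_le distZ_ge0 andbT (le_trans (distZ_le 0 0)) ?subr0 ?normr0. Qed.

Lemma distZD x y : distZ (x + y) <= distZ x + distZ y.
Proof.
have [zx ->] := distZ_attained x; have [zy ->] := distZ_attained y.
apply: le_trans (distZ_le _ (zx + zy)) _; rewrite intrD.
by rewrite opprD addrACA; apply: ler_normD.
Qed.

Lemma distZN x : distZ (- x) = distZ x.
Proof.
have le_distZN y : distZ (- y) <= distZ y.
  have [z ->] := distZ_attained y.
  by apply: le_trans (distZ_le _ (- z)) _; rewrite intrN -opprD normrN.
by apply/eqP; rewrite eq_le le_distZN -{1}[x]opprK le_distZN.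
Qed.

Lemma distZB x y : distZ (x - y) <= distZ x + distZ y.
Proof. by rewrite -(distZN y) distZD. Qed.

Lemma distZ_sum (I : Type) (s : seq I) (F : I -> R) :
  distZ (\sum_(i <- s) F i) <= \sum_(i <- s) distZ (F i).
Proof.
elim: s => [|i s IHs]; first by rewrite !big_nil distZ0.
by rewrite !big_cons (le_trans (distZD _ _)) // lerD2l.
Qed.

Lemma distZMn x (k : nat) : distZ (k%:R * x) <= k%:R * distZ x.
Proof.
have [z ->] := distZ_attained x; apply: le_trans (distZ_le _ (k%:Z * z)) _.
by rewrite intrM -mulrBr normrM normr_nat.
Qed.

Lemma distZ_double x : distZ x < 1 / 3 -> distZ (2 * x) < 1 / 3 ->
  distZ (2 * x) = 2 * distZ x.
Proof.
have [z ->] := distZ_attained x; have [w ->] := distZ_attained (2 * x).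
move=> xz_small xw_small.
suff -> : w = 2 * z by rewrite intrM -mulrBr normrM ger0_norm.
have : `|((w - 2 * z)%:~R : R)| < 1.
  rewrite intrB intrM; have -> : (w%:~R - 2%:~R * z%:~R : R) =
    (2 * (x - z%:~R)) - (2 * x - w%:~R) by rewrite [2%:~R]/=; ring.
  by apply: le_lt_trans (ler_normB _ _) _; rewrite normrM ger0_norm //; lra.
by rewrite -intr_norm ltrz1; lia.
Qed.

Lemma distZ_dyadic (L : nat) x e : e < 1 / 3 ->
  (forall l, (l <= L)%N -> distZ (2 ^+ l * x) <= e) -> distZ x <= e / 2 ^+ L.
Proof.
elim: L x => [|L IHL] x e_small close; have := close 0%N isT; rewrite expr0 mul1r.
  by rewrite divr1.
move=> close0; have close2 : distZ (2 * x) <= e / 2 ^+ L.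
  by apply: IHL => // l le_lL; rewrite mulrA -exprSr close.
have pow2L_ge1 : 1 <= (2 : R) ^+ L by apply: exprn_ege1; lra.
have e_ge0 : 0 <= e := le_trans (distZ_ge0 x) close0.
have : distZ (2 * x) = 2 * distZ x.
  apply: distZ_double; first exact: le_lt_trans e_small.
  apply: le_lt_trans close2 (le_lt_trans _ e_small).
  by rewrite ler_pdivrMr ?ler_peMr // (lt_le_trans ltr01).
rewrite exprSr invfM mulrA; move: close2; set y := e / 2 ^+ L; lra.
Qed.

End DistanceToIntegers.

Section Dirichlet.
Variable R : realType.
Implicit Types x y : R.

Definition frac x := x - (Num.floor x)%:~R.

Lemma frac_ge0 x : 0 <= frac x.
Proof. by rewrite subr_ge0 floor_le. Qed.

Lemma frac_lt1 x : frac x < 1.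
Proof. by have := floorD1_gt x; rewrite intrD1 /frac; lra. Qed.

Lemma distZ_le_frac x y : distZ (x - y) <= `|frac x - frac y|.
Proof.
apply: le_trans (distZ_le _ (Num.floor x - Num.floor y)) _; rewrite intrB.
suff -> : x - y - ((Num.floor x)%:~R - (Num.floor y)%:~R) = frac x - frac y by [].
by rewrite /frac; ring.
Qed.

Definition cell (Q : nat) x : 'I_Q.+1 := inord (Num.truncn (Q.+1%:R * frac x)).

Lemma cell_eq_close Q x y : cell Q x = cell Q y -> `|frac x - frac y| < Q.+1%:R^-1.
Proof.
have Q_gt0 : (0 : R) < Q.+1%:R by rewrite ltr0n.
have cell_nat z : (cell Q z : nat) = Num.truncn (Q.+1%:R * frac z).
  rewrite /cell inordK // ltnS truncn_le_nat -[X in _ < X]mulr1.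
  by rewrite ltr_pM2l ?frac_lt1.
move/(congr1 (@nat_of_ord _)); rewrite !cell_nat => eq_trunc.
have /andP[lex ltx] := truncn_itv (mulr_ge0 (ltW Q_gt0) (frac_ge0 x)).
have /andP[ley lty] := truncn_itv (mulr_ge0 (ltW Q_gt0) (frac_ge0 y)).
rewrite eq_trunc in lex ltx.
rewrite -[Q.+1%:R^-1]mul1r ltr_pdivlMr // -(gtr0_norm Q_gt0) -normrM mulrBl ltr_norml.
by apply/andP; split; lra.
Qed.

(* Pigeonhole: two of the (Q+1)^t + 1 points (k (B+1) alpha_j)_j share a cell of side
   1/(Q+1) modulo 1; taking multiples of B+1 forces M > B. *)
Lemma dirichlet_approx t (alpha : 'I_t -> R) (eta : R) (B : nat) : 0 < eta ->
  exists M : nat, (B < M)%N /\ forall j, distZ (M%:R * alpha j) <= eta.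
Proof.
move=> eta_gt0; pose Q := Num.truncn eta^-1.
have width_lt : Q.+1%:R^-1 < eta.
  by rewrite -[eta]invrK ltf_pV2 ?posrE ?invr_gt0 ?ltr0n // truncnS_gt.
pose y (k : nat) j := (k * B.+1)%:R * alpha j.
pose F (k : 'I_(Q.+1 ^ t).+1) := [ffun j => cell Q (y k j)].
have /injectivePn[k1 [k2 neq_k eqF]] : ~~ injectiveb F.
  by apply/injectiveP => /leq_card; rewrite card_ffun !card_ord ltnn.
wlog lt_k : k1 k2 neq_k eqF / (k1 < k2)%N.
  move=> W; case: (ltngtP k1 k2) => [|lt_k|/val_inj eq_k]; first exact: W.
    by apply: W lt_k; rewrite 1?eq_sym.
  by rewrite eq_k eqxx in neq_k.
exists ((k2 - k1) * B.+1)%N; split => [|j]; first nia.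
have := congr1 (fun f : {ffun _} => f j) eqF; rewrite /= !ffunE => /cell_eq_close.
rewrite distrC => close_k.
have -> : ((k2 - k1) * B.+1)%:R * alpha j = y k2 j - y k1 j.
  by rewrite /y mulnBl natrB ?mulrBl // leq_mul2r ltnW ?orbT.
exact: le_trans (distZ_le_frac _ _) (ltW (lt_trans close_k width_lt)).
Qed.

End Dirichlet.

Section RealPowers.
Variables (R : realType) (r : R).
Hypotheses (r_gt0 : 0 < r) (r_le1 : r <= 1).
Implicit Types a b c x u : R.

Lemma ler_powR_base x y : 0 <= x -> x <= y -> x `^ r <= y `^ r.
Proof.
move=> x0 xy; have y0 := le_trans x0 xy.
by apply: (ge0_ler_powR (ltW r_gt0)); rewrite ?nnegrE.
Qed.

Lemma powR_ge_id u : 0 <= u <= 1 -> u <= u `^ r.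
Proof.
case/andP => u0 u1; have [->|u_neq0] := eqVneq u 0; first exact: powR_ge0.
by rewrite ger1_powR // lt_def u_neq0 u0.
Qed.

Lemma powRD_le a b : 0 <= a -> 0 <= b -> (a + b) `^ r <= a `^ r + b `^ r.
Proof.
move=> a0 b0; set s := a + b; have [s0|s_neq0] := eqVneq s 0.
  by rewrite s0 powR0 ?gt_eqF // addr_ge0 ?powR_ge0.
have s_gt0 : 0 < s by rewrite lt_def s_neq0 addr_ge0.
have share_le u : 0 <= u <= s -> s `^ r * (u / s) <= u `^ r.
  case/andP => u0 us; rewrite -{2}(divfK s_neq0 u) powRM ?divr_ge0 ?(ltW s_gt0) //.
  rewrite mulrC ler_wpM2r ?powR_ge0 // powR_ge_id //.
  by rewrite divr_ge0 ?(ltW s_gt0) // ler_pdivrMr // mul1r.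
have -> : s `^ r = s `^ r * (a / s) + s `^ r * (b / s).
  by rewrite -mulrDr -mulrDl divff // mulr1.
by apply: lerD; apply: share_le; rewrite /s; apply/andP; split; lra.
Qed.

Lemma powR_le1D x : 0 <= x -> x `^ r <= 1 + x.
Proof.
move=> x0; have [x1|x1] := leP x 1.
  by have := ler_powR_base x0 x1; rewrite powR1; lra.
by have := ler1_powR (ltW x1) r_le1; lra.
Qed.

Lemma powR2_gt1 : 1 < (2 : R) `^ r.
Proof.
by rewrite /powR pnatr_eq0 expR_gt1 mulr_gt0 // ln_gt0 // ltr1n.
Qed.

Lemma sum_geom_powR_le (L : nat) c : 0 <= c ->
  \sum_(l < L.+1) (2 ^+ l * c) `^ r <= (2 ^+ L.+1 * c) `^ r / (2 `^ r - 1).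
Proof.
move=> c0; have q_gt1 := powR2_gt1; set q := (2 : R) `^ r in q_gt1 *.
have powR_geom l : (2 ^+ l * c) `^ r = c `^ r * q ^+ l.
  by rewrite powRM ?exprn_ge0 // -powR_mulrn // powRAC powR_mulrn ?powR_ge0 // mulrC.
under eq_bigr do rewrite powR_geom.
rewrite -mulr_sumr powR_geom ler_pdivlMr ?subr_gt0 // -mulrA [_ * (q - 1)]mulrC -subrX1.
by rewrite ler_wpM2l ?powR_ge0 // gerBl.
Qed.

Lemma powR_le_div s a e : 0 < s -> 0 <= a -> 0 <= e ->
  a <= e * s^-1 `^ r^-1 -> a `^ r <= e `^ r / s.
Proof.
move=> s_gt0 a0 e0 a_le; apply: le_trans (ler_powR_base a0 a_le) _.
rewrite powRM ?powR_ge0 // -powRrM mulVf ?gt_eqF // powRr1 // invr_ge0 ltW //.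
Qed.

End RealPowers.

Section MultiplesOnTheTorus.
Variable R : realType.
Implicit Types (a : R) (m : int).

Lemma nrm_ge0 m a : 0 <= nrm m a.
Proof. exact: distZ_ge0. Qed.

Lemma nrmD m m' a : nrm (m + m') a <= nrm m a + nrm m' a.
Proof. by rewrite /nrm intrD mulrDl distZD. Qed.

Lemma nrmB m m' a : nrm (m - m') a <= nrm m a + nrm m' a.
Proof. by rewrite /nrm intrB mulrBl distZB. Qed.

Lemma nrmMn (k : nat) m a : nrm (k%:Z * m) a <= k%:R * nrm m a.
Proof. by rewrite /nrm intrM -mulrA distZMn. Qed.

Lemma nrm_sum (I : Type) (s : seq I) (f : I -> int) a :
  nrm (\sum_(i <- s) f i) a <= \sum_(i <- s) nrm (f i) a.
Proof. by rewrite /nrm rmorph_sum mulr_suml distZ_sum. Qed.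

Lemma nrm_pow2 (l : nat) m a : nrm ((2 ^ l)%:Z * m) a = distZ (2 ^+ l * (m%:~R * a)).
Proof. by rewrite /nrm intrM mulrA -pmulrn natrX. Qed.

End MultiplesOnTheTorus.

Lemma sumr_undup_le (R : numDomainType) (T : eqType) (s : seq T) (f : T -> R) :
  (forall x, 0 <= f x) -> \sum_(x <- undup s) f x <= \sum_(x <- s) f x.
Proof.
move=> f_ge0; elim: s => [//|x s IHs] /=; rewrite big_cons.
by case: ifP => _; rewrite ?big_cons ?lerD2l // (le_trans IHs) ?lerDr.
Qed.

Section DyadicShifts.
Variables (Rn : nat) (n : 'I_Rn -> int) (L : 'I_Rn -> nat) (M : int).

Definition dyadic_shifts : seq int :=
  M :: flatten [seq [seq M + (2 ^ l)%:Z * n i | l <- index_iota 0 (L i).+1]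
               | i <- enum 'I_Rn].

Lemma dyadic_shifts_center : M \in dyadic_shifts.
Proof. exact: mem_head. Qed.

Lemma dyadic_shifts_shift i l : (l <= L i)%N -> M + (2 ^ l)%:Z * n i \in dyadic_shifts.
Proof.
move=> le_l; rewrite inE; apply/orP; right; apply/flattenP.
exists [seq M + (2 ^ l')%:Z * n i | l' <- index_iota 0 (L i).+1].
  by apply/mapP; exists i; rewrite ?mem_enum.
by apply/mapP; exists l; rewrite ?mem_index_iota.
Qed.

Lemma dyadic_shiftsP x : x \in dyadic_shifts ->
  x = M \/ exists i l, (l <= L i)%N /\ x = M + (2 ^ l)%:Z * n i.
Proof.
rewrite inE => /orP[/eqP ->|/flattenP[s /mapP[i _ ->] /mapP[l]]]; first by left.
by rewrite mem_index_iota => le_l ->; right; exists i, l.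
Qed.

Lemma dyadic_shifts_ge x : x \in dyadic_shifts ->
  M - (\sum_i 2 ^ L i * `|n i|)%N%:Z <= x.
Proof.
case/dyadic_shiftsP => [->|[i [l [le_l ->]]]]; first by rewrite gerBl.
have le_sum : (2 ^ L i * `|n i| <= \sum_i 2 ^ L i * `|n i|)%N.
  by rewrite (bigD1 i) //= leq_addr.
have le_pow : (2 ^ l <= 2 ^ L i)%N by rewrite leq_exp2l.
move: le_sum le_pow; move: (\sum_i _)%N (2 ^ l)%N (2 ^ L i)%N => s p P; nia.
Qed.

Lemma sum_dyadic_shifts (V : nmodType) (F : int -> V) :
  \sum_(x <- dyadic_shifts) F x =
    F M + \sum_i \sum_(l < (L i).+1) F (M + (2 ^ l)%:Z * n i).
Proof.
rewrite big_cons big_flatten big_map big_enum.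
by congr (_ + _); apply: eq_bigr => i _; rewrite big_map big_mkord.
Qed.

Variables (R : realType) (r : R).
Hypotheses (r_gt0 : 0 < r) (r_le1 : r <= 1).

Lemma sum_powR_nrm_dyadic_shifts_le (a : R) :
  \sum_(x <- dyadic_shifts) nrm x a `^ r <=
    (1 + \sum_i (L i).+1)%N%:R * nrm M a `^ r
    + \sum_i (2 ^+ (L i).+1 * nrm (n i) a) `^ r / (2 `^ r - 1).
Proof.
set A := nrm M a `^ r; rewrite sum_dyadic_shifts.
have shift_le i l : nrm (M + (2 ^ l)%:Z * n i) a `^ r
    <= A + (2 ^+ l * nrm (n i) a) `^ r.
  apply: le_trans (powRD_le r_gt0 r_le1 (nrm_ge0 _ _) _) ; last first.
    by rewrite mulr_ge0 ?exprn_ge0 ?nrm_ge0.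
  apply: (ler_powR_base r_gt0); first exact: nrm_ge0.
  by apply: le_trans (nrmD _ _ _) _; rewrite lerD2l -natrX nrmMn.
have block_le i : \sum_(l < (L i).+1) nrm (M + (2 ^ l)%:Z * n i) a `^ r
    <= (L i).+1%:R * A + (2 ^+ (L i).+1 * nrm (n i) a) `^ r / (2 `^ r - 1).
  apply: le_trans; first by apply: ler_sum => l _; exact: shift_le.
  rewrite big_split /= sumr_const card_ord mulr_natl lerD2l.
  apply: (sum_geom_powR_le r_gt0); exact: nrm_ge0.
apply: le_trans (lerD (lexx A) (ler_sum _ (fun i _ => block_le i))) _.
rewrite big_split /= addrA -mulr_suml natrD natr_sum mulrDl mul1r.
by rewrite (eq_bigr (fun i => (L i).+1%:R)).
Qed.

Lemma nrm_generator_le i (b d : R) : d < 1 / 6 ->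
  (forall x, x \in dyadic_shifts -> nrm x b <= d) -> nrm (n i) b <= 2 * d / 2 ^+ L i.
Proof.
move=> d_small close; apply: distZ_dyadic => [|l le_l]; first lra.
rewrite -nrm_pow2 -[_ * n i](addrK M) [_ + M]addrC.
apply: le_trans (nrmB _ _ _) _.
by have := close _ (dyadic_shifts_shift le_l); have := close _ dyadic_shifts_center; lra.
Qed.

Lemma nrm_combination_le (K k : 'I_Rn -> nat) (b d : R) : d < 1 / 6 ->
  (forall i, (2 * Rn * K i <= 2 ^ L i)%N) -> (forall i, (k i <= K i)%N) ->
  (forall x, x \in dyadic_shifts -> nrm x b <= d) ->
  nrm (\sum_i (k i)%:Z * n i) b <= d.
Proof.
move=> d_small L_large k_le close.
have d_ge0 : 0 <= d := le_trans (nrm_ge0 _ _) (close _ dyadic_shifts_center).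
apply: le_trans (nrm_sum _ _ _) _.
apply: (@le_trans _ _ (\sum_(i < Rn) d / Rn%:R)).
  apply: ler_sum => i _; apply: le_trans (nrmMn _ _ _) _.
  have Rn_gt0 : (0 : R) < Rn%:R by rewrite ltr0n (leq_ltn_trans _ (ltn_ord i)).
  have P_gt0 : (0 : R) < 2 ^+ L i by rewrite exprn_gt0.
  have P_large : 2 * Rn%:R * (K i)%:R <= (2 ^+ L i : R).
    by rewrite -natrX -!natrM ler_nat.
  have k_leR : (k i)%:R <= (K i)%:R :> R by rewrite ler_nat.
  have := nrm_generator_le i d_small close; rewrite ler_pdivlMr // ler_pdivlMr //.
  have := nrm_ge0 (n i) b; set c := nrm (n i) b => c_ge0 cP_le.
  have kc_le : (k i)%:R * c * Rn%:R <= (K i)%:R * Rn%:R * c.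
    by rewrite mulrAC ler_wpM2r ?ler_wpM2r // ltW.
  nra.
rewrite sumr_const card_ord; have [-> //|Rn_gt0] := posnP Rn.
by rewrite -[_ *+ Rn]mulr_natr divfK // pnatr_eq0 -lt0n.
Qed.

End DyadicShifts.

Lemma up_log2_le_double m : (0 < m)%N -> (2 ^ up_log 2 m <= 2 * m)%N.
Proof.
case: m => [//|[|m]] _; first by rewrite up_log1.
have := up_log_gtn (isT : (1 < 2)%N) (isT : (1 < m.+2)%N).
by case: (up_log 2 m.+2) => [|e] //=; rewrite expnS; lia.
Qed.

Section DyadicApproximation.
Variables (R : realType) (t : nat) (C1 : R) (alpha : 'I_t -> R) (eps r : R).
Variables (Rn : nat) (n : 'I_Rn -> int) (K : 'I_Rn -> nat).
Hypotheses (eps_gt0 : 0 < eps) (r_gt0 : 0 < r) (r_le1 : r <= 1).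
Hypotheses (Rn_le : Rn%:R <= C1) (K_gt0 : forall i, (0 < K i)%N).
Hypothesis sumK_le :
  forall j, \sum_(i < Rn) (K i)%:R * nrm (n i) (alpha j) <= C1 * eps.

Definition dyadic_length i := up_log 2 (2 * Rn * K i).
Local Notation L := dyadic_length.

Definition shift_count := (1 + \sum_i (L i).+1)%N.

(* Chosen so that shift_count * approx_radius ^ r = eps ^ r, as ||M alpha||^r enters the
   bound once for each of the shift_count dyadic shifts of M. *)
Definition approx_radius : R := eps * (shift_count%:R)^-1 `^ r^-1.

Lemma approx_radius_gt0 : 0 < approx_radius.
Proof. by rewrite mulr_gt0 // powR_gt0 // invr_gt0 ltr0n. Qed.

Lemma dyadic_length_large i : (2 * Rn * K i <= 2 ^ L i)%N.
Proof. exact: up_logP. Qed.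

Lemma dyadic_length_small i : (2 ^ (L i).+1 <= 8 * Rn * K i)%N.
Proof.
have Rn_gt0 : (0 < Rn)%N by apply: leq_ltn_trans (ltn_ord i).
have := @up_log2_le_double (2 * Rn * K i); rewrite !muln_gt0 Rn_gt0 K_gt0 expnS.
by rewrite /L; move=> /(_ isT); lia.
Qed.

Lemma powR_top_shift_le j i :
  (2 ^+ (L i).+1 * nrm (n i) (alpha j)) `^ r <= (1 + 8 * C1 ^+ 2) * eps `^ r.
Proof.
set c := nrm (n i) (alpha j); have c_ge0 : 0 <= c := nrm_ge0 _ _.
have Kc_le : (K i)%:R * c <= C1 * eps.
  apply: le_trans (sumK_le j); rewrite (bigD1 i) //= lerDl.
  by apply: sumr_ge0 => i' _; rewrite mulr_ge0 ?nrm_ge0.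
have pow_le : (2 ^+ (L i).+1 : R) <= 8 * Rn%:R * (K i)%:R.
  by rewrite -natrX -[8]/(8%:R) -!natrM ler_nat dyadic_length_small.
have C1_ge0 : 0 <= C1 := le_trans (ler0n _ _) Rn_le.
have block_le : 2 ^+ (L i).+1 * c <= 8 * C1 ^+ 2 * eps.
  apply: le_trans (ler_wpM2r c_ge0 pow_le) _.
  have Kc_ge0 : 0 <= (K i)%:R * c by rewrite mulr_ge0.
  have := ler_wpM2r Kc_ge0 Rn_le; have := ler_wpM2l C1_ge0 Kc_le; nra.
apply: le_trans (ler_powR_base r_gt0 _ block_le) _; first by rewrite mulr_ge0 ?exprn_ge0.
rewrite powRM ?mulr_ge0 ?sqr_ge0 ?(ltW eps_gt0) // ler_wpM2r ?powR_ge0 //.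
by rewrite powR_le1D ?mulr_ge0 ?sqr_ge0.
Qed.

Lemma dyadic_approx_sum_powR_le (M : nat) j :
  nrm M%:Z (alpha j) <= approx_radius ->
  \sum_(x <- dyadic_shifts n L M%:Z) nrm x (alpha j) `^ r
    <= (1 + C1 * (1 + 8 * C1 ^+ 2)) * (eps `^ r / (2 `^ r - 1)).
Proof.
move=> M_close; apply: le_trans; first exact: sum_powR_nrm_dyadic_shifts_le.
have q_gt1 := powR2_gt1 r_gt0; set q := (2 : R) `^ r in q_gt1 *.
set E := eps `^ r; set CC := 1 + 8 * C1 ^+ 2.
have count_le : shift_count%:R * nrm M%:Z (alpha j) `^ r <= E.
  rewrite mulrC -ler_pdivlMr ?ltr0n //.
  apply: (powR_le_div r_gt0) M_close; [by rewrite ltr0n | exact: nrm_ge0 | exact: ltW].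
have q1_gt0 : 0 < q - 1 by rewrite subr_gt0.
have blocks_le : \sum_i (2 ^+ (L i).+1 * nrm (n i) (alpha j)) `^ r / (q - 1)
    <= C1 * CC * (E / (q - 1)).
  rewrite -mulr_suml mulrA ler_wpM2r ?invr_ge0 ?(ltW q1_gt0) //.
  apply: (@le_trans _ _ (\sum_(i < Rn) CC * E)).
    by apply: ler_sum => i _; apply: powR_top_shift_le.
  have CC_ge0 : 0 <= CC by rewrite /CC; nra.
  have CCE_ge0 : 0 <= CC * E by rewrite mulr_ge0 ?powR_ge0.
  by rewrite sumr_const card_ord -mulr_natl -mulrA ler_wpM2r.
have E_le : E <= E / (q - 1).
  have q_le2 : q <= 2 by apply: ler1_powR; rewrite ?ler1n.
  by rewrite ler_pdivlMr //; have := powR_ge0 eps r; rewrite -/E; nra.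
by rewrite -/shift_count; move: count_le blocks_le E_le; lra.
Qed.

End DyadicApproximation.

Theorem lemma7 (R : realType) (t : nat) (C1 : R) :
  BiroSos_prop t C1 ->
  exists C2 : R,
    forall (alpha : 'I_t -> R) (eps r : R) (N U : nat),
      0 < eps -> eps <= 1 / C1 -> 0 < r -> r <= 1 -> (0 < N)%N -> (0 < U)%N ->
      exists S : seq int,
        [/\ S != [::], uniq S,
            (forall n, n \in S -> U%:Z < n),
            (forall j : 'I_t,
               \sum_(n <- S) (nrm n (alpha j)) `^ r
                 <= C2 * (eps `^ r / ((2 : R) `^ r - 1)))
          & forall beta : R,
              Num.min (1 / 6) (nrmset beta (Hset alpha N eps)) <= nrmset beta S].
Proof.
move=> biro_sos; exists (1 + C1 * (1 + 8 * C1 ^+ 2)).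
move=> alpha eps r N U eps_gt0 eps_le r_gt0 r_le1 N_gt0 _.
have [Rn [n [K [Rn_le nK_pos sumK_le _ H_sub]]]] :=
  biro_sos alpha eps N eps_gt0 eps_le N_gt0.
have K_gt0 i : (0 < K i)%N by have [] := nK_pos i.
pose L := dyadic_length K.
pose B := (U + \sum_i 2 ^ L i * `|n i|)%N.
have [M [B_lt_M M_close]] := dirichlet_approx alpha B (approx_radius_gt0 r K eps_gt0).
pose S := dyadic_shifts n L M%:Z.
exists (undup S); split.
- by apply/eqP => /(congr1 (fun s => M%:Z \in s)); rewrite mem_undup dyadic_shifts_center.
- exact: undup_uniq.
- move=> x; rewrite mem_undup => /dyadic_shifts_ge; move: B_lt_M; rewrite /B; lia.
- move=> j; apply: le_trans (sumr_undup_le _ (fun x => powR_ge0 _ _)) _.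
  exact: (dyadic_approx_sum_powR_le eps_gt0 r_gt0 r_le1 Rn_le K_gt0 sumK_le (M_close j)).
move=> beta; set d := nrmset beta (undup S).
have [d_large|d_small] := leP (1 / 6) d; first by rewrite ge_min d_large.
rewrite ge_min /nrmset big_seq; apply/orP; right.
apply: bigmax_le => [|m /H_sub[k [k_le ->]]]; first exact: bigmax_ge_id.
apply: (nrm_combination_le (M := M%:Z) d_small (dyadic_length_large K)) => [i|x xS].
  by have /andP[] := k_le i.
by rewrite /d /nrmset (le_bigmax_seq 0 x xpredT) ?mem_undup.
Qed.
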